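(* Under the setting of Theorem 1 (with $\mathcal{S}$, $h$, $m$, $\delta=\operatorname{TV}(m,h)>0$, $n,k$, $\alpha\in[0,1]$ with $(1-\alpha)nk\in\mathbb{Z}$, $H_{long}=h^{\otimes nk}$ and $M_{long}=m^{\otimes (1-\alpha)nk}\otimes h^{\otimes \alpha nk}$), every measurable detector score $D:\mathcal{S}^{nk}\to\mathbb{R}$ satisfies $$\operatorname{AUROC}(D)\le 1-\tfrac{1}{2}(1-\delta)^{2nk(1-\alpha)}.$$
   Context: For probability measures $P,Q$, $\operatorname{TV}(P,Q)=\sup_A|P(A)-Q(A)|$ over measurable sets $A$. For a score $D$, with $X\sim M_{long}$ and $Y\sim H_{long}$ independent, $\operatorname{AUROC}(D)=\Pr(D(X)>D(Y))+\tfrac12\Pr(D(X)=D(Y))$, i.e. the area under the ROC curve (true positive rate on $M_{long}$ against false positive rate on $H_{long}$) of the detector that thresholds $D$. The long human text consists of $nk$ i.i.d. sequences from $h$; the long machine text consists of $(1-\alpha)nk$ independent sequences from $m$ and $\alpha nk$ independent sequences from $h$. *)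

From HB Require Import structures.
From mathcomp Require Import all_boot all_order all_algebra.
From mathcomp Require Import all_classical all_reals all_analysis.
Set Implicit Arguments. Unset Strict Implicit. Unset Printing Implicit Defensive.
Import Order.TTheory GRing.Theory Num.Theory.
Local Open Scope classical_set_scope.
Local Open Scope ring_scope.

Fixpoint Spow {dS : measure_display} (S : measurableType dS) (N : nat)
  : {d : measure_display & measurableType d} :=
  match N with
  | 0 => existT (fun d => measurableType d) _ unit
  | N'.+1 => existT (fun d => measurableType d) _ (S * projT2 (Spow S N'))%type
  end.

Definition SN {dS : measure_display} (S : measurableType dS) (N : nat) :
  measurableType (projT1 (Spow S N)) := projT2 (Spow S N).

Fixpoint prodP {dS : measure_display} (S : measurableType dS) (R : realType)
  (N : nat) (mu : nat -> probability S R) : probability (SN S N) R :=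
  match N return probability (SN S N) R with
  | 0 => [the probability _ _ of \d_tt]
  | N'.+1 => [the probability _ _ of (mu 0%N \x prodP N' (fun i => mu i.+1))%E]
  end.

Definition TV {d : measure_display} {T : measurableType d} {R : realType}
  (P Q : probability T R) : R :=
  sup [set r : R | exists A : set T, measurable A /\ r = `|fine (P A) - fine (Q A)|].

(** AUROC of score D with X ~ PM (machine), Y ~ PH (human) independent:
    Pr(D X > D Y) + 1/2 Pr(D X = D Y), computed under the product law PM (x) PH. *)
Definition AUROC {d : measure_display} {T : measurableType d} {R : realType}
  (PM PH : probability T R) (D : T -> R) : \bar R :=
  ((PM \x PH) [set xy | (D xy.2 < D xy.1)%R]
   + (2^-1)%:E * (PM \x PH) [set xy | D xy.1 = D xy.2])%E.

Definition Hlong {dS : measure_display} {S : measurableType dS} {R : realType}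
  (h : probability S R) (N : nat) : probability (SN S N) R :=
  prodP N (fun _ => h).

Definition Mlong {dS : measure_display} {S : measurableType dS} {R : realType}
  (m h : probability S R) (K N : nat) : probability (SN S N) R :=
  prodP N (fun i => if (i < K)%N then m else h).

(* The measures m and h share a common part: by the Hahn decomposition of m - h,
   the measure min(m, h) has mass g >= 1 - TV m h, so its normalisation c satisfies
   g c <= m and g c <= h.  Coordinatewise, M_long and H_long then both dominate
   g^K C for one product probability C.  Since AUROC = 1 - Pr(loss) - Pr(tie)/2,
   and under C (x) C swapping the two samples exchanges wins and losses, the
   common part alone forces Pr(loss) + Pr(tie)/2 >= g^(2K)/2, hence
   AUROC <= 1 - g^(2K)/2 <= 1 - (1 - TV m h)^(2K)/2. *)

From HB Require Import structures.
From mathcomp Require Import all_boot all_order all_algebra.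
From mathcomp Require Import all_classical all_reals all_analysis.
From mathcomp Require Import measurable_realfun lra.
Set Implicit Arguments. Unset Strict Implicit. Unset Printing Implicit Defensive.
Import Order.TTheory GRing.Theory Num.Theory.
Local Open Scope classical_set_scope.
Local Open Scope ring_scope.

Section probability_values.
Context d (T : measurableType d) (R : realType).
Implicit Types P Q : probability T R.

Lemma probability_fineE Q A : measurable A ->
  [/\ 0 <= fine (Q A), fine (Q A) <= 1 & Q A = (fine (Q A))%:E].
Proof.
move=> mA; have QA1 := probability_le1 Q mA.
have fQA : Q A \is a fin_num.
  by rewrite ge0_fin_numE ?measure_ge0 // (le_lt_trans QA1) ?ltey.
by rewrite fine_ge0 ?measure_ge0 // -lee_fin fineK.
Qed.

Lemma abs_sub_probability_le1 P Q A : measurable A ->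
  `|fine (P A) - fine (Q A)| <= 1.
Proof.
move=> mA; have [P0 P1 _] := probability_fineE P mA.
have [Q0 Q1 _] := probability_fineE Q mA.
by rewrite ler_norml; apply/andP; split; lra.
Qed.

Lemma le_TV P Q A : measurable A -> `|fine (P A) - fine (Q A)| <= TV P Q.
Proof.
move=> mA; apply: sup_upper_bound; last by exists A.
split; first by exists `|fine (P A) - fine (Q A)|, A.
by exists 1 => _ [B [mB ->]]; exact: abs_sub_probability_le1.
Qed.

Lemma TV_le1 P Q : TV P Q <= 1.
Proof.
apply: ge_sup; first by exists `|fine (P set0) - fine (Q set0)|, set0.
by move=> _ [B [mB ->]]; exact: abs_sub_probability_le1.
Qed.

End probability_values.

Lemma prod_if_ltn (R : comPzSemiRingType) (g : R) (K N : nat) :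
  \prod_(i < N) (if (i < K)%N then g else 1) = g ^+ minn K N.
Proof.
elim: N => [|N IH]; first by rewrite big_ord0 minn0 expr0.
rewrite big_ord_recr /= IH; case: (ltnP N K) => NK.
  by rewrite (minn_idPr NK) exprSr.
by rewrite mulr1 (minn_idPl (leqW NK)).
Qed.

Section minorant.
Local Open Scope ereal_scope.
Context (R : realType).

Definition minorant d (T : measurableType d) (a : R) (nu mu : set T -> \bar R) :=
  forall A, measurable A -> a%:E * nu A <= mu A.

Lemma minorant_integral d (T : measurableType d)
    (mu nu : {finite_measure set T -> \bar R}) (a : R) :
  (0 <= a)%R -> minorant a nu mu ->
  forall f : T -> \bar R, measurable_fun setT f -> (forall x, 0 <= f x) ->
  a%:E * \int[nu]_x f x <= \int[mu]_x f x.
Proof.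
move=> a0 nu_mu f mf f0.
(* mu = a nu + (mu - a nu), and the difference is a (nonnegative) measure. *)
pose ch := cadd (charge_of_finite_measure mu)
                (cscale (- a) (charge_of_finite_measure nu)).
have chE A : ch A = mu A - a%:E * nu A.
  by rewrite -mulNe -EFinN.
have ch_ge0 E : 0 <= crestr0 ch measurableT E.
  rewrite /crestr0; case: ifPn => // /[!inE] mE.
  by rewrite /crestr setIT chE sube_ge0 ?nu_mu // fin_numM ?fin_num_measure.
pose rest := measure_of_charge _ ch_ge0.
have -> : \int[mu]_x f x = \int[measure_add (mscale (NngNum a0) nu) rest]_x f x.
  apply: eq_measure_integral => A mA _.
  change (mu A = measure_add (mscale (NngNum a0) nu) rest A).
  rewrite measure_addE /= /measure_of_charge /crestr0 mem_set // /crestr setIT.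
  change (mu A = a%:E * nu A + ch A); rewrite chE.
  by rewrite addeC subeK // fin_numM ?fin_num_measure.
rewrite ge0_integral_measure_add // ge0_integral_mscale //.
by rewrite leeDl // integral_ge0.
Qed.

Lemma minorant_product d1 d2 (T1 : measurableType d1) (T2 : measurableType d2)
    (mu1 nu1 : probability T1 R) (mu2 nu2 : probability T2 R) (a b : R) :
  (0 <= a)%R -> (0 <= b)%R -> minorant a nu1 mu1 -> minorant b nu2 mu2 ->
  minorant (a * b) (nu1 \x nu2) (mu1 \x mu2).
Proof.
move=> a0 b0 nu_mu1 nu_mu2 C mC; rewrite /product_measure1 /=.
apply: (@le_trans _ _ (b%:E * \int[mu1]_x (nu2 \o xsection C) x)).
  rewrite mulrC EFinM -muleA lee_wpmul2l ?lee_fin //.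
  by apply: minorant_integral => //; exact: measurable_fun_xsection.
rewrite -ge0_integralZl //; last exact: measurable_fun_xsection.
apply: ge0_le_integral => //.
- by move=> x _; rewrite mule_ge0 // lee_fin.
- by apply: emeasurable_funM => //; exact: measurable_fun_xsection.
- exact: measurable_fun_xsection.
- by move=> x _ /=; apply: nu_mu2; exact: measurable_xsection.
Qed.

Lemma minorant_prodP dS (S : measurableType dS) (N : nat)
    (f g : nat -> probability S R) (a : nat -> R) :
  (forall i, 0 <= a i)%R -> (forall i, minorant (a i) (g i) (f i)) ->
  minorant (\prod_(i < N) a i) (prodP N g) (prodP N f).
Proof.
elim: N f g a => [|N IH] f g a a0 g_f C mC; first by rewrite big_ord0 mul1e.
rewrite big_ord_recl; apply: minorant_product => //.
- exact: prodr_ge0.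
- exact: (IH (fun i => f i.+1) (fun i => g i.+1) (fun i => a i.+1)).
Qed.

Lemma minorant_prodP_prefix dS (S : measurableType dS) (N K : nat) (g : R)
    (c h : probability S R) (f : nat -> probability S R) :
  (0 <= g)%R -> (K <= N)%N ->
  (forall i, (i < K)%N -> minorant g c (f i)) -> (forall i, (K <= i)%N -> f i = h) ->
  minorant (g ^+ K) (prodP N (fun i => if (i < K)%N then c else h)) (prodP N f).
Proof.
move=> g0 KN fK fh; rewrite -[X in (g ^+ X)%R](minn_idPl KN) -prod_if_ltn.
apply: (minorant_prodP (a := fun i => if (i < K)%N then g else 1%R)) => [i|i A mA].
  by case: ifP.
rewrite /=; case: ltnP => iK; [exact: fK | by rewrite fh // mul1e].
Qed.

Lemma minorant_fine d (T : measurableType d) (mu nu : probability T R) (a : R) A :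
  minorant a nu mu -> measurable A -> (a * fine (nu A) <= fine (mu A))%R.
Proof.
move=> nu_mu mA; have [_ _ nuA] := probability_fineE nu mA.
have [_ _ muA] := probability_fineE mu mA.
by rewrite -lee_fin EFinM -nuA -muA nu_mu.
Qed.

End minorant.

Section product_swap.
Local Open Scope ereal_scope.
Context d1 d2 (T1 : measurableType d1) (T2 : measurableType d2) (R : realType).

Lemma product_measure_swap (P : probability T1 R) (Q : probability T2 R)
    (A : set (T1 * T2)) : measurable A ->
  (P \x Q) A = (Q \x P) [set yx | A (yx.2, yx.1)].
Proof.
move=> mA; rewrite (@product_measure_unique _ _ _ _ _ P Q (P \x^ Q)) //.
by move=> A1 A2 mA1 mA2; exact: product_measure2E.
Qed.

End product_swap.

Section AUROC_bound.
Local Open Scope ereal_scope.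
Context (R : realType) d (T : measurableType d) (D : T -> R).
Hypothesis mD : measurable_fun setT D.

Let wins := [set xy : T * T | (D xy.2 < D xy.1)%R].
Let ties := [set xy : T * T | D xy.1 = D xy.2].
Let losses := [set xy : T * T | (D xy.1 < D xy.2)%R].

Let mD1 : measurable_fun setT (fun xy : T * T => D xy.1).
Proof. exact: measurableT_comp. Qed.

Let mD2 : measurable_fun setT (fun xy : T * T => D xy.2).
Proof. exact: measurableT_comp. Qed.

Let mtrue : measurable [set true]. Proof. by []. Qed.

Let mwins : measurable wins.
Proof. by have := measurable_fun_ltr mD2 mD1 measurableT mtrue; rewrite setTI. Qed.

Let mlosses : measurable losses.
Proof. by have := measurable_fun_ltr mD1 mD2 measurableT mtrue; rewrite setTI. Qed.

Let mties : measurable ties.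
Proof.
have := measurable_fun_eqr mD1 mD2 measurableT mtrue; rewrite setTI.
by congr measurable; apply/seteqP; split => xy /= /eqP.
Qed.

Let outcomes (Q : probability (T * T)%type R) :
  (fine (Q wins) + fine (Q ties) + fine (Q losses) = 1)%R.
Proof.
have [_ _ Qw] := probability_fineE Q mwins.
have [_ _ Qt] := probability_fineE Q mties.
have [_ _ Ql] := probability_fineE Q mlosses.
have wt_l : (wins `|` ties) `&` losses = set0.
  apply/seteqP; split => // -[x y]; rewrite /wins /ties /losses /=.
  by move=> -[[gt|eq] lt]; [move: gt; rewrite ltNge (ltW lt) | rewrite eq ltxx in lt].
have w_t : wins `&` ties = set0.
  by apply/seteqP; split => // -[x y]; rewrite /wins /ties /= => -[+ eq]; rewrite eq ltxx.
apply: EFin_inj; rewrite !EFinD -Qw -Qt -Ql.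
rewrite -measureU // -measureU //; last exact: measurableU.
rewrite (_ : wins `|` ties `|` losses = setT); first exact: probability_setT.
apply/seteqP; split => // -[x y] _; rewrite /wins /ties /losses /=.
by case: (ltgtP (D x) (D y)) => [lt|lt|eq]; [right|left; left|left; right].
Qed.

Let AUROC_fineE (M H : probability T R) :
  AUROC M H D = (fine ((M \x H) wins) + 2^-1 * fine ((M \x H) ties))%:E.
Proof.
have [_ _ Qw] := probability_fineE (M \x H) mwins.
have [_ _ Qt] := probability_fineE (M \x H) mties.
by rewrite /AUROC -/wins -/ties {1}Qw {1}Qt.
Qed.

Let self_losses (P : probability T R) :
  (fine ((P \x P) losses) + 2^-1 * fine ((P \x P) ties) = 2^-1)%R.
Proof.
have sym : fine ((P \x P) wins) = fine ((P \x P) losses).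
  by rewrite product_measure_swap.
have := outcomes (P \x P); lra.
Qed.

Lemma AUROC_le_common_minorant (M H P : probability T R) (a : R) :
  (0 <= a)%R -> minorant a P M -> minorant a P H ->
  AUROC M H D <= (1 - 2^-1 * a ^+ 2)%:E.
Proof.
move=> a0 PM PH; have PPMH := minorant_product a0 a0 PM PH.
have ties_dom := minorant_fine PPMH mties.
have losses_dom := minorant_fine PPMH mlosses.
have := outcomes (M \x H); have := self_losses P.
rewrite AUROC_fineE lee_fin expr2; nra.
Qed.

End AUROC_bound.

Section overlap.
Local Open Scope ereal_scope.
Context (R : realType) dS (S : measurableType dS).

Lemma mnormalize_minorant (mu : {measure set S -> \bar R}) (Q : probability S R) :
  minorant (fine (mu setT)) (mnormalize mu Q) mu.
Proof.
move=> A mA; rewrite /mnormalize; case: ifPn => [/orP[|] /eqP -> |]; rewrite ?mul0e //.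
rewrite negb_or => /andP[mu0 muoo].
have mufin : mu setT \is a fin_num by rewrite ge0_fin_numE // ltey.
by rewrite muleCA -EFinM divff ?mule1 // fine_eq0.
Qed.

Lemma overlap_measure (m h : probability S R) :
  exists c : {measure set S -> \bar R},
    [/\ forall A, measurable A -> c A <= m A,
        forall A, measurable A -> c A <= h A &
        (1 - TV m h)%:E <= c setT].
Proof.
pose nu := cadd (charge_of_finite_measure m) (copp (charge_of_finite_measure h)).
have [P [N [[mP posP] [mN negN] PN PN0]]] := Hahn_decomposition nu.
have splitPN (mu : probability S R) A : measurable A ->
    mu A = mu (A `&` P) + mu (A `&` N).
  move=> mA; rewrite -measureU; first by rewrite -setIUr PN setIT.
  - exact: measurableI.
  - exact: measurableI.
  - by rewrite setIACA setIid PN0 setI0.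
pose c : {measure set S -> \bar R} := measure_add (mrestr h mP) (mrestr m mN).
have cE A : c A = h (A `&` P) + m (A `&` N).
  by change (measure_add (mrestr h mP) (mrestr m mN) A = h (A `&` P) + m (A `&` N));
     rewrite measure_addE.
exists c.
split => [A mA|A mA|]; rewrite cE.
- rewrite [leRHS](splitPN m) // leeD2r //.
  have : 0 <= m (A `&` P) - h (A `&` P) by apply: posP; [exact: measurableI|].
  by rewrite sube_ge0 ?fin_num_measure //; exact: measurableI.
- rewrite [leRHS](splitPN h) // leeD2l //.
  have : m (A `&` N) - h (A `&` N) <= 0 by apply: negN; [exact: measurableI|].
  by rewrite sube_le0 ?fin_num_measure //; exact: measurableI.
have [_ _ mPE] := probability_fineE m mP.
have [_ _ mNE] := probability_fineE m mN.
have [_ _ hPE] := probability_fineE h mP.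
have m1 : (fine (m P) + fine (m N) = 1)%R.
  apply: EFin_inj; rewrite EFinD -mPE -mNE -[P]setTI -[N]setTI -splitPN //.
  exact: probability_setT.
have := le_TV m h mP; have := ler_norm (fine (m P) - fine (h P)).
by rewrite !setTI hPE mNE -EFinD lee_fin; lra.
Qed.

Lemma common_minorant_TV (m h : probability S R) :
  exists (c : probability S R) (g : R),
    [/\ (0 <= g)%R, (1 - TV m h <= g)%R, minorant g c m & minorant g c h].
Proof.
have [c [cm ch cT]] := overlap_measure m h.
have cT_fin : c setT \is a fin_num.
  rewrite ge0_fin_numE // (le_lt_trans (cm _ measurableT)) //.
  by rewrite probability_setT ltey.
exists (mnormalize c h), (fine (c setT)); split.
- exact: fine_ge0.
- by rewrite -lee_fin fineK.
- by move=> A mA; apply: le_trans (mnormalize_minorant c h mA) (cm A mA).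
- by move=> A mA; apply: le_trans (mnormalize_minorant c h mA) (ch A mA).
Qed.

End overlap.


Theorem theorem2 (R : realType) (dS : measure_display) (S : measurableType dS)
  (h m : probability S R) (n k : nat) (alpha : R) (K : nat)
  (hdelta : 0 < TV m h)
  (halpha0 : 0 <= alpha) (halpha1 : alpha <= 1)
  (hK : (1 - alpha) * (n * k)%:R = K%:R)
  (D : SN S (n * k) -> R) (mD : measurable_fun setT D) :
  (AUROC (Mlong m h K (n * k)) (Hlong h (n * k)) D
   <= (1 - 2^-1 * (1 - TV m h) ^+ (2 * K))%:E)%E.
Proof.
have KN : (K <= n * k)%N.
  by rewrite -(ler_nat R) -hK ler_piMl ?ler0n // lerBlDr lerDl.
have [c [g [g0 gTV cm ch]]] := common_minorant_TV m h.
pose C := prodP (n * k) (fun i => if (i < K)%N then c else h).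
have Mlong_minorant : minorant (g ^+ K) C (Mlong m h K (n * k)).
  apply: minorant_prodP_prefix => // i /=; first by move=> ->.
  by rewrite ltnNge => ->.
have Hlong_minorant : minorant (g ^+ K) C (Hlong h (n * k)).
  exact: minorant_prodP_prefix.
apply: le_trans (AUROC_le_common_minorant mD (exprn_ge0 K g0)
  Mlong_minorant Hlong_minorant) _.
rewrite lee_fin -exprM mulnC lerD2l lerN2 ler_pM2l // lerXn2r ?nnegrE //.
by rewrite subr_ge0 TV_le1.
Qed.
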